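(* Let $G$ be a group. Jensen's equation $f(xy)+f(xy^{-1})=2f(x)$ is stable over $G$ (i.e. stable for the pair $(G;E)$ for every real Banach space $E$, equivalently for some real Banach space $E$) if and only if $PJ(G)=J_0(G)$.
   Context: For a real Banach space $E$, the equation is stable for the pair $(G;E)$ if for every $f\colon G\to E$ such that for some $c>0$, $\|f(xy)+f(xy^{-1})-2f(x)\|\le c$ for all $x,y\in G$, there exists $j\colon G\to E$ with $j(xy)+j(xy^{-1})=2j(x)$ for all $x,y$ and $j-f$ bounded. $PJ(G)$ is the space of functions $f\colon G\to\mathbb{R}$ such that for some $c>0$, $|f(xy)+f(xy^{-1})-2f(x)|\le c$ for all $x,y$, and $f(x^n)=nf(x)$ for all $x\in G$, $n\in\mathbb{Z}$. $J_0(G)$ is the space of $f\colon G\to\mathbb{R}$ with $f(xy)+f(xy^{-1})=2f(x)$ for all $x,y$ and $f(1)=0$. *)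

From HB Require Import structures.
From mathcomp Require Import all_boot all_order all_algebra.
From mathcomp Require Import monoid.
From mathcomp Require Import all_classical all_reals all_analysis.
From mathcomp Require Import Rstruct Rstruct_topology.
Set Implicit Arguments. Unset Strict Implicit. Unset Printing Implicit Defensive.
Import Order.TTheory GRing.Theory Num.Theory.
Import numFieldNormedType.Exports.
Local Open Scope ring_scope.

Notation RR := Rdefinitions.R.

Definition zpowg (G : groupType) (x : G) (n : int) : G :=
  match n with
  | Posz k => (x ^+ k)%g
  | Negz k => (x ^- k.+1)%g
  end.

Definition jensen_stable (G : groupType) (E : completeNormedModType RR) : Prop :=
  forall f : G -> E,
    (exists c : RR, 0 < c /\
       forall x y : G, `|f (x * y)%g + f (x * y^-1)%g - 2%:R *: f x| <= c) ->
    exists j : G -> E,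
      (forall x y : G, j (x * y)%g + j (x * y^-1)%g = 2%:R *: j x) /\
      (exists M : RR, forall x : G, `|j x - f x| <= M).

Definition PJ (G : groupType) (f : G -> RR) : Prop :=
  (exists c : RR, 0 < c /\
     forall x y : G, `|f (x * y)%g + f (x * y^-1)%g - 2 * f x| <= c) /\
  (forall (x : G) (n : int), f (zpowg x n) = n%:~R * f x).

Definition J0 (G : groupType) (f : G -> RR) : Prop :=
  (forall x y : G, f (x * y)%g + f (x * y^-1)%g = 2 * f x) /\ f 1%g = 0.

(* Stability implies PJ(G) = J_0(G): for f in PJ(G), stability with E = R gives
   a solution j of Jensen's equation at bounded distance from f.  Both f and
   j - j(1) are homogeneous on cyclic subgroups, so their difference h is bounded
   with h(x^2) = 2 h(x); hence h = 0 and f = j - j(1) lies in J_0(G).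
   Conversely, normalise f(1) = 0 and take Hyers' limit
   F(x) = lim_n 2^-n f(x^(2^n)): it stays within c of f, is homogeneous and solves
   Jensen's equation up to a bounded error.  For every linear functional phi
   dominated by the norm, phi o F therefore lies in PJ(G) = J_0(G), so phi kills
   each Jensen defect of F, and by Hahn-Banach these defects vanish. *)

From HB Require Import structures.
From mathcomp Require Import all_boot all_order all_algebra.
From mathcomp Require Import monoid.
From mathcomp Require Import all_classical all_reals all_analysis.
From mathcomp Require Import Rstruct Rstruct_topology.
From mathcomp Require Import ring lra zify.
Set Implicit Arguments. Unset Strict Implicit. Unset Printing Implicit Defensive.
Import Order.TTheory GRing.Theory Num.Theory.
Import numFieldNormedType.Exports.
Local Open Scope ring_scope.
Local Open Scope classical_set_scope.

Section HahnBanach.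
Variables (R : realType) (E : normedModType R).

Definition dominated_linear_functional (phi : E -> R) :=
  [/\ forall a b, phi (a + b) = phi a + phi b,
      forall t a, phi (t *: a) = t * phi a &
      forall a, `|phi a| <= `|a|].

(* Graphs of partial linear functionals dominated by the norm and taking the
   value [`|v|] at [v]; the last clause lets the empty graph qualify, as Zorn's
   lemma demands for the empty chain. *)
Definition norming_graph (v : E) (A : set (E * R)) :=
  [/\ forall a r s, A (a, r) -> A (a, s) -> r = s,
      forall a b r s, A (a, r) -> A (b, s) -> A (a + b, r + s),
      forall t a r, A (a, r) -> A (t *: a, t * r),
      forall a r, A (a, r) -> r <= `|a| &
      A !=set0 -> A (v, `|v|)].

Lemma norming_graph_bigcup v (F : set (set (E * R))) :
  F `<=` norming_graph v -> total_on F subset ->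
  norming_graph v (\bigcup_(X in F) X).
Proof.
move=> FA Ftot; split.
- move=> a r s [X FX Xar] [Y FY Yas].
  have [XY|YX] := Ftot X Y FX FY.
  + by have [fun_Y _ _ _ _] := FA Y FY; apply: fun_Y (XY _ Xar) Yas.
  + by have [fun_X _ _ _ _] := FA X FX; apply: fun_X Xar (YX _ Yas).
- move=> a b r s [X FX Xar] [Y FY Ybs].
  have [XY|YX] := Ftot X Y FX FY.
  + by exists Y => //; have [_ add_Y _ _ _] := FA Y FY; apply: add_Y (XY _ Xar) Ybs.
  + by exists X => //; have [_ add_X _ _ _] := FA X FX; apply: add_X Xar (YX _ Ybs).
- move=> t a r [X FX Xar]; exists X => //.
  by have [_ _ scale_X _ _] := FA X FX; apply: scale_X.
- by move=> a r [X FX Xar]; have [_ _ _ dom_X _] := FA X FX; apply: dom_X Xar.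
- move=> [p [X FX Xp]]; exists X => //.
  by have [_ _ _ _ v_X] := FA X FX; apply: v_X; exists p.
Qed.

Lemma norming_graph_line v : v != 0 ->
  norming_graph v (range (fun t => (t *: v, t * `|v|))).
Proof.
move=> v0; split.
- move=> a r s [t _ [<- <-]] [t' _ [tv <-]].
  have /eqP : (t' - t) *: v = 0 by rewrite scalerBl tv subrr.
  by rewrite scaler_eq0 (negbTE v0) orbF subr_eq0 => /eqP ->.
- move=> a b r s [t _ [<- <-]] [t' _ [<- <-]].
  by exists (t + t') => //; rewrite scalerDl mulrDl.
- move=> u a r [t _ [<- <-]].
  by exists (u * t) => //; rewrite scalerA mulrA.
- by move=> a r [t _ [<- <-]]; rewrite normrZ ler_wpM2r ?ler_norm.
- by move=> _; exists 1 => //; rewrite scale1r mul1r.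
Qed.

Section OneStepExtension.
Variables (v w : E) (A : set (E * R)).
Hypotheses (hA : norming_graph v A) (A00 : A (0, 0)).

Lemma norming_graph_slope :
  exists c, forall a r, A (a, r) -> r - `|a - w| <= c /\ c <= `|a + w| - r.
Proof.
have [_ addA _ domA _] := hA.
pose S := [set p.2 - `|p.1 - w| | p in A].
have S_ub b s : A (b, s) -> ubound S (`|b + w| - s).
  move=> Abs _ [[a r] Aar <-] /=.
  have := domA _ _ (addA _ _ _ _ Aar Abs).
  have := ler_normD (a - w) (b + w).
  rewrite addrACA addNr addr0; lra.
have S_sup : has_sup S.
  by split; [exists (0 - `|0 - w|), (0, 0) | exists (`|0 + w| - 0); apply: S_ub].
exists (sup S) => a r Aar; split.
- by apply: sup_upper_bound => //; exists (a, r).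
- by apply: ge_sup; [case: S_sup | apply: S_ub].
Qed.

Lemma norming_graph_slope_scale c :
  (forall a r, A (a, r) -> r - `|a - w| <= c /\ c <= `|a + w| - r) ->
  forall t a r, A (a, r) -> r + t * c <= `|a + t *: w|.
Proof.
have [_ _ scaleA domA _] := hA.
move=> hc t a r Aar; have [t_gt0|t_lt0|<-] := ltgtP 0 t.
- have [_] := hc _ _ (scaleA t^-1 _ _ Aar).
  move=> /(ler_wpM2l (ltW t_gt0)).
  rewrite mulrBr mulrA mulfV ?gt_eqF // mul1r -[X in X * `|_|]gtr0_norm //.
  by rewrite -normrZ scalerDr scalerA mulfV ?gt_eqF // scale1r; lra.
- have nt_gt0 : 0 < - t by rewrite oppr_gt0.
  have [/(ler_wpM2l (ltW nt_gt0)) + _] := hc _ _ (scaleA (- t)^-1 _ _ Aar).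
  rewrite mulrBr mulrA mulfV ?gt_eqF // mul1r -[X in X * `|_|]gtr0_norm //.
  by rewrite -normrZ scalerBr scalerA mulfV ?gt_eqF // scale1r scaleNr opprK; lra.
- by rewrite mul0r scale0r !addr0; apply: domA.
Qed.

Lemma norming_graph_extend : (forall r, ~ A (w, r)) ->
  exists2 B, norming_graph v B & A `<` B.
Proof.
move=> w_notin; have [funA addA scaleA _ vA] := hA.
have [c hc] := norming_graph_slope.
have slope := norming_graph_slope_scale hc.
have subA a r a' r' : A (a, r) -> A (a', r') -> A (a' - a, r' - r).
  by move=> Aar /addA; apply; have := scaleA (-1) _ _ Aar; rewrite scaleN1r mulN1r.
pose B := [set q | exists a r t, A (a, r) /\ q = (a + t *: w, r + t * c)].
have AB : A `<=` B by move=> [a r] Aar; exists a, r, 0; rewrite scale0r mul0r !addr0.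
exists B; last first.
  split => // BA; apply: (w_notin c); apply: BA.
  by exists 0, 0, 1; rewrite scale1r mul1r !add0r.
split.
- move=> _ _ _ [a [r [t [Aar [-> ->]]]]] [a' [r' [t' [Aar' [e ->]]]]].
  have tt' : t = t'.
    apply: contrapT => /eqP; rewrite -subr_eq0 => tt'0.
    apply: (w_notin ((t - t')^-1 * (r' - r))).
    have e' : (t - t') *: w = a' - a.
      by apply: (addrI a); rewrite scalerBl addrA e addrK addrCA subrr addr0.
    have -> : w = (t - t')^-1 *: (a' - a) by rewrite -e' scalerA mulVf // scale1r.
    by apply: scaleA; apply: subA.
  move: e; rewrite -tt' => /addIr aa'; rewrite aa' in Aar.
  by rewrite (funA _ _ _ Aar Aar').
- move=> _ _ _ _ [a [r [t [Aar [-> ->]]]]] [a' [r' [t' [Aar' [-> ->]]]]].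
  exists (a + a'), (r + r'), (t + t'); split; first exact: addA.
  by rewrite scalerDl mulrDl; congr pair; rewrite addrACA.
- move=> u _ _ [a [r [t [Aar [-> ->]]]]].
  exists (u *: a), (u * r), (u * t); split; first exact: scaleA.
  by rewrite scalerDr scalerA mulrDr mulrA.
- by move=> _ _ [a [r [t [Aar [-> ->]]]]]; apply: slope.
- by move=> _; apply: AB; apply: vA; exists (0, 0).
Qed.

End OneStepExtension.

Lemma hahn_banach v : v != 0 ->
  exists2 phi, dominated_linear_functional phi & phi v = `|v|.
Proof.
move=> v0; have [A [hA maxA]] := Zorn_bigcup (@norming_graph_bigcup v).
have [funA addA scaleA domA vA] := hA.
have Av : A (v, `|v|).
  apply: contrapT => Anv; apply: (maxA _ _ (norming_graph_line v0)); split.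
    by move=> p Ap; exfalso; apply: Anv; apply: vA; exists p.
  by move=> /(_ (v, `|v|)) Lv; apply/Anv/Lv; exists 1 => //; rewrite scale1r mul1r.
have A00 : A (0, 0) by have := scaleA 0 _ _ Av; rewrite scale0r mul0r.
have /choice[phi Aphi] : forall w, exists r, A (w, r).
  move=> w; apply: contrapT => /forallNP w_notin.
  by have [B hB AB] := norming_graph_extend hA A00 w_notin; apply: maxA hB.
have phiE w r : A (w, r) -> phi w = r by apply: funA.
exists phi; last exact: phiE.
split=> [a b|t a|a]; first exact/phiE/addA.
  exact/phiE/scaleA.
rewrite ler_norml domA // andbT lerNl.
by have := domA _ _ (scaleA (-1) _ _ (Aphi a)); rewrite scaleN1r mulN1r normrN.
Qed.

Lemma dominated_functionals_separate u :
  (forall phi, dominated_linear_functional phi -> phi u = 0) -> u = 0.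
Proof.
move=> phi_u0; apply: contrapT => /eqP u0.
have [phi hphi phiu] := hahn_banach u0.
by move: u0; rewrite -normr_eq0 -phiu phi_u0 ?eqxx.
Qed.

End HahnBanach.

Section Jensen.
Variables (R : pzRingType) (V : lmodType R) (G : groupType).
Implicit Types (f : G -> V) (x y : G).

Definition jensen f := forall x y, f (x * y)%g + f (x * y^-1)%g = 2%:R *: f x.

Definition jensen_defect f x y := f (x * y)%g + f (x * y^-1)%g - 2%:R *: f x.

Lemma jensenP f : jensen f <-> forall x y, jensen_defect f x y = 0.
Proof.
split=> hf x y; apply/eqP; first by rewrite subr_eq0; apply/eqP; apply: hf.
by rewrite -subr_eq0; apply/eqP; apply: hf.
Qed.

Lemma jensen_defect_addr f k x y :
  jensen_defect (fun z => f z + k) x y = jensen_defect f x y.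
Proof.
rewrite /jensen_defect (addrACA (f _) k) scalerDr [2%:R *: k]scaler_nat [k *+ 2]mulr2n.
by rewrite opprD (addrACA _ (k + k)) subrr addr0.
Qed.

Lemma jensen_addr f k : jensen f -> jensen (fun z => f z + k).
Proof. by move=> /jensenP hf; apply/jensenP => x y; rewrite jensen_defect_addr. Qed.

Lemma jensen_defectB f1 f2 x y :
  jensen_defect (f1 \- f2) x y = jensen_defect f1 x y - jensen_defect f2 x y.
Proof.
rewrite /jensen_defect /= scalerBr opprB [in RHS]opprB (addrACA (f1 _)) -(opprD (f2 _)).
rewrite (addrACA (f1 _ + f1 _)) (addrACA (f1 _ + f1 _) (- (2%:R *: f1 x))).
by rewrite (addrC (- (f2 _ + f2 _))).
Qed.

Lemma jensen_expg f : jensen f -> f 1%g = 0 -> forall x n, f (x ^+ n)%g = f x *+ n.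
Proof.
move=> hf f1 x n; suff : f (x ^+ n)%g = f x *+ n /\ f (x ^+ n.+1)%g = f x *+ n.+1 by case.
elim: n => [|n [IHn IHSn]]; first by rewrite expg0 f1 expg1.
split=> //; apply: (addIr (f (x ^+ n)%g)).
have := hf (x ^+ n.+1)%g x; rewrite -expgSr [X in f (X * _)%g]expgSr mulgK => ->.
by rewrite IHn IHSn scaler_nat -mulrnA -mulrnDr; congr (_ *+ _); lia.
Qed.

Lemma jensen_invg f : jensen f -> f 1%g = 0 -> forall x, f x^-1%g = - f x.
Proof.
move=> hf f1 x; have := hf 1%g x; rewrite !mul1g f1 scaler0 addrC => /eqP.
by rewrite addr_eq0 => /eqP.
Qed.

End Jensen.

Lemma natmul_bounded_eq0 (R : archiNumFieldType) (a K : R) :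
  0 <= a -> (forall n, a *+ n <= K) -> a = 0.
Proof.
move=> a_ge0 aK; apply/eqP; apply: contraT => a_neq0.
have a_gt0 : 0 < a by rewrite lt_def a_neq0.
have K_ge0 : 0 <= K / a by rewrite divr_ge0 // (le_trans a_ge0 (aK 1%N)).
have := aK (Num.Def.archi_bound (K / a)).
rewrite -mulr_natl -ler_pdivlMr // => /(lt_le_trans (archi_boundP K_ge0)).
by rewrite ltxx.
Qed.

Lemma doubling_bounded_eq0 (R : archiNumFieldType) (G : groupType) (V : normedModType R)
    (h : G -> V) (K : R) :
  (forall x, h (x ^+ 2)%g = 2%:R *: h x) -> (forall x, `|h x| <= K) ->
  forall x, h x = 0.
Proof.
move=> h2 hK x; have h2n n : h (x ^+ (2 ^ n))%g = 2 ^+ n *: h x.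
  elim: n => [|n IHn]; first by rewrite expg1 scale1r.
  by rewrite expnSr expgnA h2 IHn scalerA exprSr mulrC.
apply/normr0_eq0/(natmul_bounded_eq0 (K := K)) => // n.
apply: le_trans (hK (x ^+ (2 ^ n))%g); rewrite h2n normrZ ger0_norm ?exprn_ge0 //.
rewrite -[`|h x| *+ n]mulr_natl; apply: ler_wpM2r => //.
by rewrite -natrX ler_nat ltnW // ltn_expl.
Qed.

Section HalvingIncrements.
Variables (R : realType) (V : completeNormedModType R) (u : nat -> V) (c : R).
Hypothesis u_step : forall n, `|u n.+1 - u n| <= c / 2 ^+ n.+1.

Let c_ge0 : 0 <= c.
Proof. by have := le_trans (normr_ge0 _) (u_step 0); rewrite expr1; lra. Qed.

Lemma halving_increments_dist n k :
  `|u (n + k)%N - u n| <= c / 2 ^+ n - c / 2 ^+ (n + k).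
Proof.
elim: k => [|k IHk]; first by rewrite addn0 !subrr normr0.
rewrite addnS; have := ler_distD (u (n + k)%N) (u (n + k).+1) (u n).
have := u_step (n + k).
have : c / 2 ^+ (n + k) = 2 * (c / 2 ^+ (n + k).+1).
  by rewrite exprS; field; rewrite gt_eqF.
lra.
Qed.

Lemma halving_increments_cvg : cvgn u.
Proof.
apply/cauchy_cvgP/cauchy_exP => e e_gt0.
pose N := Num.Def.archi_bound (c / e).
have cN : c / 2 ^+ N < e.
  rewrite ltr_pdivrMr // mulrC -ltr_pdivrMr //.
  apply: lt_le_trans (archi_boundP _) _; first by rewrite divr_ge0 // ltW.
  by rewrite -natrX ler_nat ltnW // ltn_expl.
exists (u N); exists N => // n /= /subnKC <-; rewrite -ball_normE /ball_ /=.
rewrite distrC; apply: le_lt_trans (halving_increments_dist N _) (le_lt_trans _ cN).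
by rewrite gerBl divr_ge0 // exprn_ge0.
Qed.

Lemma halving_increments_lim_dist : `|limn u - u 0%N| <= c.
Proof.
have dist_cvg : `|u n - u 0%N| @[n --> \oo] --> `|limn u - u 0%N|.
  by apply: cvg_norm; apply: cvgB; [exact: halving_increments_cvg | exact: cvg_cst].
rewrite -(cvg_lim _ dist_cvg) //; apply: limr_le; first exact: cvgP dist_cvg.
near=> n; apply: le_trans (halving_increments_dist 0 n) _.
by rewrite expr0 divr1 gerBl divr_ge0 // exprn_ge0.
Unshelve. all: by end_near.
Qed.

End HalvingIncrements.

Lemma jensen_defect_le (R : realFieldType) (G : groupType) (V : normedModType R)
    (f : G -> V) (K : R) :
  (forall x, `|f x| <= K) -> forall x y, `|jensen_defect f x y| <= K *+ 4.
Proof.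
move=> fK x y; apply: le_trans (ler_normB _ _) _.
rewrite normrZ ger0_norm ?ler0n //.
have := ler_normD (f (x * y)%g) (f (x * y^-1)%g).
have := fK (x * y)%g; have := fK (x * y^-1)%g; have := fK x; lra.
Qed.

Section Hyers.
Variables (R : realType) (G : groupType) (E : completeNormedModType R).
Variables (g : G -> E) (c : R).
Hypotheses (g_defect : forall x y, `|jensen_defect g x y| <= c) (g1 : g 1%g = 0).

Let c_ge0 : 0 <= c := le_trans (normr_ge0 _) (g_defect 1%g 1%g).

Lemma defect_expg2 x : `|g (x ^+ 2)%g - 2%:R *: g x| <= c.
Proof. by have := g_defect x x; rewrite /jensen_defect mulgV g1 addr0 -expg2. Qed.

Lemma defect_invg x : `|g x + g x^-1%g| <= c.
Proof. by have := g_defect 1%g x; rewrite /jensen_defect !mul1g g1 scaler0 subr0. Qed.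

Lemma defect_expgS x m : `|g (x ^+ m.+1)%g - g (x ^+ m)%g - g x| <= c *+ m.
Proof.
elim: m => [|m IHm]; first by rewrite expg1 expg0 g1 subr0 subrr normr0.
have := g_defect (x ^+ m.+1)%g x.
rewrite /jensen_defect -expgSr [X in g (X / x)%g]expgSr mulgK => step.
set a := g (x ^+ m.+2)%g; set b := g (x ^+ m.+1)%g; set b' := g (x ^+ m)%g.
have -> : a - b - g x = (a + b' - 2%:R *: b) + (b - b' - g x).
  by rewrite scaler_nat mulr2n !opprD !addrA addrNK [a + b' - b]addrAC addrK.
by rewrite [c *+ _]mulrS; apply: le_trans (ler_normD _ _) (lerD step IHm).
Qed.

Lemma defect_expg x m : `|g (x ^+ m)%g - g x *+ m| <= c *+ (m * m).
Proof.
elim: m => [|m IHm]; first by rewrite expg0 g1 subr0 normr0.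
set a := g (x ^+ m.+1)%g; set b := g (x ^+ m)%g.
have -> : a - g x *+ m.+1 = (a - b - g x) + (b - g x *+ m).
  by rewrite mulrSr !opprD !addrA [a - b - g x + b]addrAC addrNK addrAC.
apply: le_trans (ler_normD _ _) (le_trans (lerD (defect_expgS x m) IHm) _).
by rewrite -mulrnDr; apply: ler_wpMn2l => //; lia.
Qed.

Definition hyers_seq x n := (2 ^+ n)^-1 *: g (x ^+ (2 ^ n))%g.

Definition hyers x := limn (hyers_seq x).

Lemma hyers_seq_step x n :
  `|hyers_seq x n.+1 - hyers_seq x n| <= c / 2 ^+ n.+1.
Proof.
rewrite /hyers_seq expnSr expgnA; set y := (x ^+ (2 ^ n))%g.
have -> : (2 ^+ n.+1)^-1 *: g (y ^+ 2)%g - (2 ^+ n)^-1 *: g y =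
          (2 ^+ n.+1)^-1 *: (g (y ^+ 2)%g - 2%:R *: g y).
  rewrite [RHS]scalerBr [in RHS]scalerA; congr (_ - _ *: _).
  by rewrite exprS; field; rewrite gt_eqF.
rewrite normrZ ger0_norm ?invr_ge0 ?exprn_ge0 // [c / _]mulrC.
by apply: ler_wpM2l; [rewrite invr_ge0 exprn_ge0 | exact: defect_expg2].
Qed.

Lemma hyers_cvg x : cvgn (hyers_seq x).
Proof. exact: halving_increments_cvg (hyers_seq_step x). Qed.

Lemma hyers_dist x : `|hyers x - g x| <= c.
Proof.
have seq0 : hyers_seq x 0 = g x by rewrite /hyers_seq expr0 invr1 scale1r expg1.
by rewrite -seq0; exact: halving_increments_lim_dist (hyers_seq_step x).
Qed.

Lemma hyers_expg2 x : hyers (x ^+ 2)%g = 2%:R *: hyers x.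
Proof.
have seq2 : hyers_seq (x ^+ 2)%g = fun n => 2%:R *: hyers_seq x n.+1.
  apply/funext => n; rewrite /hyers_seq -expgnA -expnS scalerA exprS.
  by congr (_ *: _); field; rewrite expf_neq0.
rewrite /hyers seq2; apply: cvg_lim => //; apply: cvgZ; first exact: cvg_cst.
by rewrite (cvg_shiftS (hyers_seq x)); exact: hyers_cvg.
Qed.

Lemma hyers_expg x m : hyers (x ^+ m)%g = hyers x *+ m.
Proof.
apply/eqP; rewrite -subr_eq0; apply/eqP; move: x.
apply: (doubling_bounded_eq0 (K := c + c *+ (m * m) + c *+ m)) => x.
  by rewrite expgnAC !hyers_expg2 scalerBr scalerMnr.
have -> : hyers (x ^+ m)%g - hyers x *+ m = (hyers (x ^+ m)%g - g (x ^+ m)%g)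
    + (g (x ^+ m)%g - g x *+ m) + (g x - hyers x) *+ m.
  by rewrite mulrnBl [(_ - g (x ^+ m)%g) + _]addrA addrNK addrA addrNK.
apply: le_trans (ler_normD _ _) (lerD (le_trans (ler_normD _ _) _) _).
  exact: lerD (hyers_dist _) (defect_expg _ _).
by rewrite normrMn distrC; apply: ler_wMn2r; exact: hyers_dist.
Qed.

Lemma hyers_invg x : hyers x^-1%g = - hyers x.
Proof.
apply/eqP; rewrite -addr_eq0; apply/eqP; move: x.
apply: (doubling_bounded_eq0 (K := c + c + c)) => x.
  by rewrite -expVgn !hyers_expg2 scalerDr.
have -> : hyers x^-1%g + hyers x =
    (hyers x^-1%g - g x^-1%g) + (g x^-1%g + g x) + (hyers x - g x).
  by rewrite [(_ - g x^-1%g) + _]addrA addrNK -addrA [g x + _]addrCA subrr addr0.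
apply: le_trans (ler_normD _ _) (lerD (le_trans (ler_normD _ _) _) (hyers_dist _)).
by apply: lerD (hyers_dist _) _; rewrite addrC; exact: defect_invg.
Qed.

Lemma hyers_defect x y : `|jensen_defect hyers x y| <= c *+ 5.
Proof.
rewrite -(subrK (jensen_defect g x y) (jensen_defect hyers x y)) -jensen_defectB.
apply: le_trans (ler_normD _ _) _; rewrite mulrS addrC; apply: lerD => //.
by apply: jensen_defect_le => z; exact: hyers_dist.
Qed.

End Hyers.

Lemma zpowg_homogeneous (R : pzRingType) (G : groupType) (f : G -> R) :
  (forall x n, f (x ^+ n)%g = f x *+ n) -> (forall x, f x^-1%g = - f x) ->
  forall x n, f (zpowg x n) = n%:~R * f x.
Proof.
move=> fX fV x [n|n] /=; first by rewrite fX mulr_natl.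
by rewrite fV fX NegzE mulrNz mulNr mulr_natl.
Qed.

Lemma J0_PJ (G : groupType) (f : G -> RR) : J0 f -> PJ f.
Proof.
move=> [fJ f1]; split.
  by exists 1; split=> // x y; rewrite fJ subrr normr0.
by apply: zpowg_homogeneous; [exact: (@jensen_expg _ RR^o) | exact: (@jensen_invg _ RR^o)].
Qed.

Lemma PJ_J0_of_stable (G : groupType) :
  jensen_stable G RR^o -> forall f : G -> RR, PJ f -> J0 f.
Proof.
move=> stable f [[c [c_gt0 f_defect]] f_hom].
have [j [j_jensen [M jM]]] := stable f (ex_intro _ c (conj c_gt0 f_defect)).
pose g x := j x - j 1%g.
have g_jensen : jensen g by exact: jensen_addr.
have g1 : g 1%g = 0 by rewrite /g subrr.
have fg x : f x = g x.
  apply/eqP; rewrite -subr_eq0; apply/eqP; move: x.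
  apply: (doubling_bounded_eq0 (h := fun x => (f x : RR^o) - g x)
                               (K := M + `|j 1%g|)) => x.
    by rewrite (jensen_expg g_jensen g1) (f_hom x 2) /GRing.scale /=; lra.
  have -> : (f x : RR^o) - g x = (f x - j x) + j 1%g by rewrite /g; ring.
  by apply: le_trans (ler_normD _ _) _; rewrite distrC lerD2r.
by split=> [x y|]; rewrite ?fg //; exact: g_jensen.
Qed.

Lemma dominated_linear_functional_defect (R : realType) (E : normedModType R)
    (G : groupType) (phi : E -> R) (F : G -> E) x y :
  dominated_linear_functional phi ->
  phi (jensen_defect F x y) = jensen_defect (phi \o F) x y.
Proof.
by case=> phiD phiZ _; rewrite /jensen_defect -scaleN1r !phiD phiZ phiZ mulN1r.
Qed.

Lemma PJ_dominated_hyers (G : groupType) (E : completeNormedModType RR)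
    (g : G -> E) (c : RR) (phi : E -> RR) :
  0 < c -> (forall x y, `|jensen_defect g x y| <= c) -> g 1%g = 0 ->
  dominated_linear_functional phi -> PJ (phi \o hyers g).
Proof.
move=> c_gt0 g_defect g1 hphi; have [_ phiZ phi_le] := hphi; split.
  exists (c *+ 5); split=> [|x y]; first by rewrite pmulrn_lgt0.
  rewrite -[_ - _]/(@jensen_defect _ RR^o _ (phi \o hyers g) x y).
  by rewrite -dominated_linear_functional_defect // (le_trans (phi_le _)) ?hyers_defect.
apply: zpowg_homogeneous => x /=.
  by move=> n; rewrite (hyers_expg g_defect g1) -scaler_nat phiZ mulr_natl.
by rewrite (hyers_invg g_defect g1) -scaleN1r phiZ mulN1r.
Qed.

Lemma stable_of_PJ_J0 (G : groupType) (E : completeNormedModType RR) :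
  (forall f : G -> RR, PJ f -> J0 f) -> jensen_stable G E.
Proof.
move=> PJ_J0 f [c [c_gt0 f_defect]].
pose g x := f x - f 1%g.
have g_defect x y : `|jensen_defect g x y| <= c.
  by rewrite jensen_defect_addr; exact: f_defect.
have g1 : g 1%g = 0 by rewrite /g subrr.
have hyers_jensen : jensen (hyers g).
  apply/jensenP => x y; apply: dominated_functionals_separate => phi hphi.
  have [psi_jensen _] := PJ_J0 _ (PJ_dominated_hyers c_gt0 g_defect g1 hphi).
  by rewrite dominated_linear_functional_defect //; apply/eqP; rewrite subr_eq0 psi_jensen.
exists (fun x => hyers g x + f 1%g); split; first exact: jensen_addr.
by exists c => x; rewrite -addrA -opprB; exact: hyers_dist.
Qed.

Theorem corollary3p3 (G : groupType) :
  (forall E : completeNormedModType RR, jensen_stable G E) <->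
  (forall f : G -> RR, PJ f <-> J0 f).
Proof.
split=> [stable f|PJ_J0 E].
  by split; [exact: PJ_J0_of_stable | exact: J0_PJ].
by apply: stable_of_PJ_J0 => f /PJ_J0.
Qed.
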